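(* Let $(\mathcal{C},P)$ be a $\Pi$-doctrine with full comprehension which is also a restricted $\Pi(\mathcal{C}_P)$-doctrine. For every $A$ and $\phi,\psi\in P(A)$ put $\phi\rightarrow\psi:=\Pi_{\lfloor\phi\rfloor}\lfloor\phi\rfloor^*\psi$. Then with this operation $(\mathcal{C},P)$ is implicational.
   Context: A doctrine is a pair $(\mathcal{C},P)$ where $\mathcal{C}$ is a category with finite products and $P:\mathcal{C}^{op}\to\mathbf{Pos}$ is a functor; write $f^*=P(f)$. For $u:X\to A$, a right adjoint $u^*\dashv\Pi_u$ is a monotone $\Pi_u:P(X)\to P(A)$ with $u^*\Pi_u\alpha\le\alpha$ and $\beta\le\Pi_u u^*\beta$. For a pullback-stable class $\mathcal{A}$ of arrows, $(\mathcal{C},P)$ is a $\Pi(\mathcal{A})$-doctrine if for every $f:A\to B$ in $\mathcal{A}$, $f^*$ has a right adjoint $\Pi_f$ and for every pullback square $h\circ g=f\circ k$ (with $g:Y\to X$, $k:Y\to A$, $h:X\to B$) one has $h^*\Pi_f\gamma=\Pi_g k^*\gamma$ for all $\gamma\in P(A)$ (Beck–Chevalley); it is a restricted $\Pi(\mathcal{A})$-doctrine if this is only required for $\gamma=f^*\xi$, $\xi\in P(B)$. A $\Pi$-doctrine is a $\Pi(Prj)$-doctrine, where $Prj$ is the class of product projections $X\to A$ with $A$ a factor of $X$. Comprehension: every $P(A)$ has a top $\top_A$ and for each $\alpha\in P(A)$ there is $\lfloor\alpha\rfloor:\{\alpha\}\to A$ with $\lfloor\alpha\rfloor^*\alpha=\top_{\{\alpha\}}$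 such that every $f:Y\to A$ with $f^*\alpha=\top_Y$ factors uniquely through $\lfloor\alpha\rfloor$; it is full if whenever $\lfloor\alpha\rfloor$ factors through $\lfloor\beta\rfloor$ then $\alpha\le\beta$. $\mathcal{C}_P$ is the (pullback-stable) class of arrows of the form $\lfloor\alpha\rfloor$. A doctrine is implicational if for every $A$ there is an operation $\rightarrow:P(A)\times P(A)\to P(A)$ such that: (ii) $f^*(\alpha\rightarrow\beta)=f^*\alpha\rightarrow f^*\beta$ for every $f:X\to A$; (iii) for every projection $\pi_A:X\times A\to A$, $\Pi_{\pi_A}(\pi_A^*\alpha\rightarrow\beta)=\alpha\rightarrow\Pi_{\pi_A}\beta$ for all $\alpha\in P(A)$, $\beta\in P(X\times A)$; (iv) for all $\gamma,\phi,\psi\in P(A)$: (a) $\phi\le\psi\rightarrow\phi$; (b) $\gamma\rightarrow(\phi\rightarrow\psi)\le(\gamma\rightarrow\phi)\rightarrow(\gamma\rightarrow\psi)$; (c) if $\gamma\le\phi\rightarrow\psi$ and $\gamma\le\phi$ then $\gamma\le\psi$; (d) if $\phi\le\psi$ then $\gamma\le\phi\rightarrow\psi$. *)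

Record Cat := {
  Ob :> Type;
  Hom : Ob -> Ob -> Type;
  idm : forall A, Hom A A;
  comp : forall A B C, Hom B C -> Hom A B -> Hom A C;
  comp_id_l : forall A B (f : Hom A B), comp A B B (idm B) f = f;
  comp_id_r : forall A B (f : Hom A B), comp A A B f (idm A) = f;
  comp_assoc : forall A B C D (f : Hom A B) (g : Hom B C) (h : Hom C D),
      comp A C D h (comp A B C g f) = comp A B D (comp B C D h g) f
}.
Arguments idm {c} A.
Arguments comp {c A B C} _ _.

Definition IsProduct {C : Cat} {X A B : C} (p1 : Hom C X A) (p2 : Hom C X B) : Prop :=
  forall (Z : C) (u : Hom C Z A) (v : Hom C Z B),
    exists! w : Hom C Z X, comp p1 w = u /\ comp p2 w = v.

Definition IsTerminal {C : Cat} (T : C) : Prop :=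
  forall Z : C, exists! w : Hom C Z T, True.

Definition HasFiniteProducts (C : Cat) : Prop :=
  (exists T : C, IsTerminal T) /\
  (forall A B : C, exists (X : C) (p1 : Hom C X A) (p2 : Hom C X B), IsProduct p1 p2).

Definition IsPullback {C : Cat} {Y X A B : C}
  (g : Hom C Y X) (k : Hom C Y A) (h : Hom C X B) (f : Hom C A B) : Prop :=
  comp h g = comp f k /\
  forall (Z : C) (u : Hom C Z X) (v : Hom C Z A), comp h u = comp f v ->
    exists! w : Hom C Z Y, comp g w = u /\ comp k w = v.

Record Doctrine (C : Cat) := {
  PA : C -> Type;
  leq : forall A, PA A -> PA A -> Prop;
  leq_refl : forall A (a : PA A), leq A a a;
  leq_trans : forall A (a b c : PA A), leq A a b -> leq A b c -> leq A a c;
  leq_antisym : forall A (a b : PA A), leq A a b -> leq A b a -> a = b;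
  reix : forall X A : C, Hom C X A -> PA A -> PA X;
  reix_mono : forall X A (f : Hom C X A) (a b : PA A),
      leq A a b -> leq X (reix X A f a) (reix X A f b);
  reix_id : forall A (a : PA A), reix A A (idm A) a = a;
  reix_comp : forall X Y Z (f : Hom C X Y) (g : Hom C Y Z) (a : PA Z),
      reix X Z (comp g f) a = reix X Y f (reix Y Z g a)
}.
Arguments PA {C} d A.
Arguments leq {C d A} _ _.
Arguments reix {C d X A} _ _.

Definition PiOp {C : Cat} (D : Doctrine C) :=
  forall X A : C, Hom C X A -> PA D X -> PA D A.

Definition IsRightAdj {C : Cat} {D : Doctrine C} {X A : C} (u : Hom C X A)
  (Pu : PA D X -> PA D A) : Prop :=
  (forall a b, leq a b -> leq (Pu a) (Pu b)) /\
  (forall alpha, leq (reix u (Pu alpha)) alpha) /\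
  (forall beta, leq beta (Pu (reix u beta))).

Definition ArrowClass (C : Cat) := forall X A : C, Hom C X A -> Prop.

Definition Prj (C : Cat) : ArrowClass C :=
  fun X A f => exists (B : C) (g : Hom C X B), IsProduct f g.

Definition IsPiDoctrineFor {C : Cat} {D : Doctrine C} (Pi : PiOp D) (cls : ArrowClass C) : Prop :=
  (forall X A (f : Hom C X A), cls X A f -> IsRightAdj f (Pi X A f)) /\
  (forall (Y X A B : C) (g : Hom C Y X) (k : Hom C Y A) (h : Hom C X B) (f : Hom C A B),
      cls A B f -> IsPullback g k h f ->
      forall gamma : PA D A, reix h (Pi A B f gamma) = Pi Y X g (reix k gamma)).

Definition IsRestrictedPiDoctrineFor {C : Cat} {D : Doctrine C} (Pi : PiOp D) (cls : ArrowClass C) : Prop :=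
  (forall X A (f : Hom C X A), cls X A f -> IsRightAdj f (Pi X A f)) /\
  (forall (Y X A B : C) (g : Hom C Y X) (k : Hom C Y A) (h : Hom C X B) (f : Hom C A B),
      cls A B f -> IsPullback g k h f ->
      forall xi : PA D B, reix h (Pi A B f (reix f xi)) = Pi Y X g (reix k (reix f xi))).

Definition IsTopFamily {C : Cat} {D : Doctrine C} (top : forall A, PA D A) : Prop :=
  (forall A (a : PA D A), leq a (top A)) /\
  (forall X A (f : Hom C X A), reix f (top A) = top X).

(** Comprehension: cmp A alpha = {alpha}, cmpArr A alpha = floor(alpha) : {alpha} -> A *)
Definition IsComprehension {C : Cat} {D : Doctrine C} (top : forall A, PA D A)
  (cmp : forall A : C, PA D A -> C) (cmpArr : forall A alpha, Hom C (cmp A alpha) A) : Prop :=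
  (forall A (alpha : PA D A), reix (cmpArr A alpha) alpha = top (cmp A alpha)) /\
  (forall A (alpha : PA D A) (Y : C) (f : Hom C Y A), reix f alpha = top Y ->
     exists! h : Hom C Y (cmp A alpha), f = comp (cmpArr A alpha) h).

Definition IsFullComprehension {C : Cat} {D : Doctrine C}
  (cmp : forall A : C, PA D A -> C) (cmpArr : forall A alpha, Hom C (cmp A alpha) A) : Prop :=
  forall A (alpha beta : PA D A) (h : Hom C (cmp A alpha) (cmp A beta)),
    cmpArr A alpha = comp (cmpArr A beta) h -> leq alpha beta.

(** C_P: arrows of the form floor(alpha). *)
Definition CompClass {C : Cat} {D : Doctrine C}
  (cmp : forall A : C, PA D A -> C) (cmpArr : forall A alpha, Hom C (cmp A alpha) A) : ArrowClass C :=
  fun X A f => exists alpha : PA D A,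
    existT (fun Y : C => Hom C Y A) X f = existT (fun Y : C => Hom C Y A) (cmp A alpha) (cmpArr A alpha).

Definition IsImplicational {C : Cat} {D : Doctrine C} (Pi : PiOp D)
  (imp : forall A, PA D A -> PA D A -> PA D A) : Prop :=
  (forall X A (f : Hom C X A) (a b : PA D A), reix f (imp A a b) = imp X (reix f a) (reix f b)) /\
  (forall (X A Y : C) (pX : Hom C Y X) (pA : Hom C Y A), IsProduct pX pA ->
     forall (a : PA D A) (b : PA D Y),
       Pi Y A pA (imp Y (reix pA a) b) = imp A a (Pi Y A pA b)) /\
  (forall A (g p q : PA D A),
     leq p (imp A q p) /\
     leq (imp A g (imp A p q)) (imp A (imp A g p) (imp A g q)) /\
     (leq g (imp A p q) -> leq g p -> leq g q) /\
     (leq p q -> leq g (imp A p q))).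


(* Write [sat m a] for [m^* a = top]: by comprehension it says that [m] factors
   through [cmpArr a], and by fullness [sat (cmpArr e) b] gives [e <= b].  Hence
   [d <= phi -> psi] iff every arrow satisfying [d] and [phi] satisfies [psi]
   (one direction is the counit of [cmpArr phi^* -| Pi_(cmpArr phi)], the other
   its unit), which reduces the Hilbert laws (iv) to reasoning about arrows.
   Stability (ii) is Beck-Chevalley for the pullback of [cmpArr phi] along [f],
   namely [cmpArr (f^* phi)]; only formulas reindexed along [cmpArr phi] occur,
   so the restricted condition suffices.  For (iii) both sides are compared
   through the same characterisation, using Beck-Chevalley for the pullback of
   a product projection along an arbitrary arrow. *)

Lemma IsProduct_sym (C : Cat) (X A B : C) (p1 : Hom C X A) (p2 : Hom C X B) :
  IsProduct p1 p2 -> IsProduct p2 p1.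
Proof.
  intros Hprod Z u v.
  destruct (Hprod Z v u) as [w [[Hw1 Hw2] Hw_uniq]].
  exists w. split; [split; assumption|].
  intros w' [H1 H2]. apply Hw_uniq. split; assumption.
Qed.

Lemma Prj_of_product (C : Cat) (Y X A : C) (pX : Hom C Y X) (pA : Hom C Y A) :
  IsProduct pX pA -> Prj C Y A pA.
Proof. intros Hprod. exists X, pX. apply IsProduct_sym. exact Hprod. Qed.

Lemma product_projection_pullback (C : Cat) (Y X A Z P : C)
  (pX : Hom C Y X) (pA : Hom C Y A) (q1 : Hom C P Z) (q2 : Hom C P X)
  (m : Hom C Z A) (k : Hom C P Y) :
  IsProduct pX pA -> IsProduct q1 q2 ->
  comp pX k = q2 -> comp pA k = comp m q1 ->
  IsPullback q1 k m pA.
Proof.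
  intros HY HP Hk1 Hk2. split; [symmetry; exact Hk2|].
  intros W u v Huv.
  destruct (HP W u (comp pX v)) as [w [[Hw1 Hw2] Hw_uniq]].
  exists w. split.
  - split; [exact Hw1|].
    destruct (HY W (comp pX v) (comp pA v)) as [w0 [_ Hw0_uniq]].
    transitivity w0; [symmetry|]; apply Hw0_uniq; split; try reflexivity.
    + rewrite comp_assoc, Hk1. exact Hw2.
    + rewrite comp_assoc, Hk2, <- comp_assoc, Hw1. exact Huv.
  - intros w' [H1 H2]. apply Hw_uniq. split; [exact H1|].
    rewrite <- H2, comp_assoc, Hk1. reflexivity.
Qed.

Section ComprehensionImplication.

Variables (C : Cat) (D : Doctrine C) (Pi : PiOp D) (top : forall A, PA D A)
  (cmp : forall A : C, PA D A -> C) (cmpArr : forall A alpha, Hom C (cmp A alpha) A).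

Hypothesis top_family : IsTopFamily top.
Hypothesis comprehension : IsComprehension top cmp cmpArr.
Hypothesis full_comprehension : IsFullComprehension cmp cmpArr.
Hypothesis Pi_Prj : IsPiDoctrineFor Pi (@Prj C).
Hypothesis Pi_CompClass : IsRestrictedPiDoctrineFor Pi (CompClass cmp cmpArr).
Hypothesis binary_products :
  forall U V : C, exists (P : C) (q1 : Hom C P U) (q2 : Hom C P V), IsProduct q1 q2.

Definition imp (A : C) (phi psi : PA D A) : PA D A :=
  Pi (cmp A phi) A (cmpArr A phi) (reix (cmpArr A phi) psi).

Definition sat {Z A : C} (m : Hom C Z A) (a : PA D A) : Prop := reix m a = top Z.

Lemma le_top (A : C) (a : PA D A) : leq a (top A).
Proof. apply top_family. Qed.

Lemma reix_top (X A : C) (f : Hom C X A) : reix f (top A) = top X.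
Proof. apply top_family. Qed.

Lemma top_le_eq (A : C) (a : PA D A) : leq (top A) a -> a = top A.
Proof. intros H. apply leq_antisym; [apply le_top | exact H]. Qed.

Lemma sat_cmpArr (A : C) (a : PA D A) : sat (cmpArr A a) a.
Proof. apply comprehension. Qed.

Lemma sat_le (Z A : C) (m : Hom C Z A) (a b : PA D A) :
  leq a b -> sat m a -> sat m b.
Proof.
  unfold sat. intros Hab Ha. apply top_le_eq.
  rewrite <- Ha. apply reix_mono. exact Hab.
Qed.

Lemma sat_comp (Z W A : C) (m : Hom C Z A) (n : Hom C W Z) (a : PA D A) :
  sat m a -> sat (comp m n) a.
Proof. unfold sat. intros Ha. rewrite reix_comp, Ha. apply reix_top. Qed.

Lemma sat_reix (Z A B : C) (m : Hom C Z A) (f : Hom C A B) (b : PA D B) :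
  sat m (reix f b) <-> sat (comp f m) b.
Proof. unfold sat. rewrite reix_comp. tauto. Qed.

Lemma sat_factor (Z A : C) (m : Hom C Z A) (a : PA D A) :
  sat m a -> exists h : Hom C Z (cmp A a), m = comp (cmpArr A a) h.
Proof.
  intros Ha. destruct (proj2 comprehension A a Z m Ha) as [h [Hh _]].
  exists h. exact Hh.
Qed.

Lemma cmpArr_monic (Z A : C) (a : PA D A) (u v : Hom C Z (cmp A a)) :
  comp (cmpArr A a) u = comp (cmpArr A a) v -> u = v.
Proof.
  intros Huv.
  assert (Hsat : sat (comp (cmpArr A a) u) a) by (apply sat_comp, sat_cmpArr).
  destruct (proj2 comprehension A a _ _ Hsat) as [w [_ Hw_uniq]].
  transitivity w; [symmetry|]; apply Hw_uniq; [reflexivity | exact Huv].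
Qed.

Lemma le_of_sat_cmpArr (A : C) (e b : PA D A) : sat (cmpArr A e) b -> leq e b.
Proof.
  intros Hb. destruct (sat_factor _ _ _ _ Hb) as [h Hh].
  exact (full_comprehension A e b h Hh).
Qed.

Lemma cmpArr_right_adjoint (A : C) (a : PA D A) :
  IsRightAdj (cmpArr A a) (Pi _ _ (cmpArr A a)).
Proof. apply Pi_CompClass. exists a. reflexivity. Qed.

Lemma le_imp (A : C) (d a b : PA D A) :
  leq d (imp A a b) <->
  (forall (Z : C) (m : Hom C Z A), sat m d -> sat m a -> sat m b).
Proof.
  destruct (cmpArr_right_adjoint A a) as [Pi_mono [counit unit]].
  split.
  - intros Hd Z m Hsd Hsa.
    destruct (sat_factor _ _ _ _ Hsa) as [h ->].
    apply sat_reix in Hsd. apply sat_reix.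
    apply sat_le with (reix (cmpArr A a) (imp A a b)); [apply counit|].
    apply sat_le with (reix (cmpArr A a) d); [apply reix_mono, Hd | exact Hsd].
  - intros H. eapply leq_trans; [apply unit | apply Pi_mono].
    apply le_of_sat_cmpArr, sat_reix, H.
    + apply sat_reix, sat_cmpArr.
    + apply sat_comp, sat_cmpArr.
Qed.

Lemma sat_imp_elim (Z A : C) (m : Hom C Z A) (a b : PA D A) :
  sat m (imp A a b) -> sat m a -> sat m b.
Proof. apply (proj1 (le_imp A _ a b) (leq_refl _ _ _ _)). Qed.

Lemma cmpArr_pullback (X A : C) (f : Hom C X A) (a : PA D A)
  (k : Hom C (cmp X (reix f a)) (cmp A a)) :
  comp f (cmpArr X (reix f a)) = comp (cmpArr A a) k ->
  IsPullback (cmpArr X (reix f a)) k f (cmpArr A a).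
Proof.
  intros Hk. split; [exact Hk|].
  intros Z u v Huv.
  assert (Hu : sat u (reix f a)).
  { apply sat_reix. rewrite Huv. apply sat_comp, sat_cmpArr. }
  destruct (proj2 comprehension X (reix f a) Z u Hu) as [w [Hw Hw_uniq]].
  exists w. split.
  - split; [symmetry; exact Hw|].
    apply cmpArr_monic.
    rewrite comp_assoc, <- Hk, <- comp_assoc, <- Hw. exact Huv.
  - intros w' [H1 _]. apply Hw_uniq. symmetry. exact H1.
Qed.

Lemma reix_imp (X A : C) (f : Hom C X A) (a b : PA D A) :
  reix f (imp A a b) = imp X (reix f a) (reix f b).
Proof.
  assert (Hsat : sat (comp f (cmpArr X (reix f a))) a)
    by (apply sat_reix, sat_cmpArr).
  destruct (sat_factor _ _ _ _ Hsat) as [k Hk].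
  unfold imp.
  rewrite (proj2 Pi_CompClass _ _ _ _ _ k f (cmpArr A a) (ex_intro _ a eq_refl)
             (cmpArr_pullback X A f a k Hk) b).
  rewrite <- reix_comp, <- Hk, reix_comp. reflexivity.
Qed.

Lemma sat_imp_intro (Z A : C) (m : Hom C Z A) (a b : PA D A) :
  (forall (W : C) (n : Hom C W Z), sat (comp m n) a -> sat (comp m n) b) ->
  sat m (imp A a b).
Proof.
  intros H. unfold sat. rewrite reix_imp. symmetry. apply leq_antisym.
  - apply le_imp. intros W n _ Ha. apply sat_reix, H, sat_reix, Ha.
  - apply le_top.
Qed.

Lemma imp_K (A : C) (p q : PA D A) : leq p (imp A q p).
Proof. apply le_imp. intros Z m Hp _. exact Hp. Qed.

Lemma imp_S (A : C) (g p q : PA D A) :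
  leq (imp A g (imp A p q)) (imp A (imp A g p) (imp A g q)).
Proof.
  apply le_imp. intros Z m Hgpq Hgp.
  apply sat_imp_intro. intros W n Hg.
  apply sat_imp_elim with p.
  - apply sat_imp_elim with g; [apply sat_comp|]; assumption.
  - apply sat_imp_elim with g; [apply sat_comp|]; assumption.
Qed.

Lemma imp_modus_ponens (A : C) (g p q : PA D A) :
  leq g (imp A p q) -> leq g p -> leq g q.
Proof.
  intros Himp Hp. apply le_of_sat_cmpArr.
  apply le_imp with (d := g) (a := p); [exact Himp | apply sat_cmpArr |].
  apply sat_le with g; [exact Hp | apply sat_cmpArr].
Qed.

Lemma imp_of_le (A : C) (g p q : PA D A) : leq p q -> leq g (imp A p q).
Proof. intros Hpq. apply le_imp. intros Z m _ Hp. apply sat_le with p; assumption. Qed.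

Lemma Pi_projection_imp (X A Y : C) (pX : Hom C Y X) (pA : Hom C Y A) :
  IsProduct pX pA ->
  forall (a : PA D A) (b : PA D Y),
    Pi Y A pA (imp Y (reix pA a) b) = imp A a (Pi Y A pA b).
Proof.
  intros HY a b.
  pose proof (Prj_of_product _ _ _ _ pX pA HY) as HprjA.
  destruct (proj1 Pi_Prj _ _ _ HprjA) as [PiA_mono [PiA_counit PiA_unit]].
  apply leq_antisym.
  - apply le_imp. intros Z m Hd Ha.
    destruct (binary_products Z X) as [P [q1 [q2 HP]]].
    destruct (HY P q2 (comp m q1)) as [k [[Hk1 Hk2] _]].
    pose proof (Prj_of_product _ _ _ _ q2 q1 (IsProduct_sym _ _ _ _ _ _ HP)) as Hprj1.
    destruct (proj1 Pi_Prj _ _ _ Hprj1) as [Pi1_mono [_ Pi1_unit]].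
    unfold sat.
    rewrite (proj2 Pi_Prj _ _ _ _ _ k m pA HprjA
               (product_projection_pullback _ _ _ _ _ _ pX pA q1 q2 m k HY HP Hk1 Hk2) b).
    apply top_le_eq. eapply leq_trans; [apply Pi1_unit | apply Pi1_mono].
    rewrite reix_top.
    assert (Hkb : sat k b).
    { apply sat_imp_elim with (reix pA a).
      - apply sat_le with (reix pA (Pi Y A pA (imp Y (reix pA a) b)));
          [apply PiA_counit|].
        apply sat_reix. rewrite Hk2. apply sat_comp. exact Hd.
      - apply sat_reix. rewrite Hk2. apply sat_comp. exact Ha. }
    rewrite Hkb. apply leq_refl.
  - eapply leq_trans; [apply PiA_unit | apply PiA_mono].
    apply le_imp. intros Z m Hd Ha.
    apply sat_reix in Hd, Ha.
    apply sat_le with (reix pA (Pi Y A pA b)); [apply PiA_counit|].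
    apply sat_reix. exact (sat_imp_elim _ _ _ _ _ Hd Ha).
Qed.

End ComprehensionImplication.

Theorem mainTheorem2 :
  forall (C : Cat) (D : Doctrine C) (Pi : PiOp D)
         (top : forall A, PA D A) (cmp : forall A : C, PA D A -> C)
         (cmpArr : forall A alpha, Hom C (cmp A alpha) A),
    HasFiniteProducts C ->
    IsTopFamily top ->
    IsComprehension top cmp cmpArr ->
    IsFullComprehension cmp cmpArr ->
    IsPiDoctrineFor Pi (@Prj C) ->
    IsRestrictedPiDoctrineFor Pi (CompClass cmp cmpArr) ->
    IsImplicational Pi
      (fun A phi psi => Pi (cmp A phi) A (cmpArr A phi) (reix (cmpArr A phi) psi)).
Proof.
  intros C D Pi top cmp cmpArr [_ binary_products] Htop Hcmp Hfull HPrj HComp.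
  change (IsImplicational Pi (imp C D Pi cmp cmpArr)).
  split; [|split].
  - eapply reix_imp; eassumption.
  - intros X A Y pX pA HY. eapply Pi_projection_imp; eassumption.
  - intros A g p q. repeat split.
    + eapply imp_K; eassumption.
    + eapply imp_S; eassumption.
    + eapply imp_modus_ponens; eassumption.
    + eapply imp_of_le; eassumption.
Qed.
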